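(* The function $\sigma$ satisfies $$\lim_{T\to0^+}\sigma(T)=+\infty\qquad\text{and}\qquad\lim_{T\to+\infty}\sigma(T)=-\infty,$$ where $\sigma(T)=c'(1)+\phi_1''(1)$ and $c=c_T$ is the continuous solution on $[0,1]$ of $$c''+(n-1)\frac{C_k(r)}{S_k(r)}c'+\Big[\lambda_1-\Big(\frac{2\pi}{T}\Big)^2\Big]c=0,\qquad c(1)=-\phi_1'(1).$$
   Context: Let $n\ge 2$ and $k\in\{1,-1\}$; $S_k=\sin,\ C_k=\cos$ if $k=1$ and $S_k=\sinh,\ C_k=\cosh$ if $k=-1$ (so that $dr^2+S_k(r)^2d\theta^2$ is the metric of $\mathbb{S}^n$, resp. $\mathbb{H}^n$, in geodesic polar coordinates). $\lambda_1$ is the smallest positive number for which the ODE $u''+(n-1)\frac{C_k(r)}{S_k(r)}u'+\lambda_1u=0$ has a solution $\phi_1$ bounded at $r=0$, positive on $[0,1)$ and vanishing at $r=1$ (the first Dirichlet eigenvalue of the unit geodesic ball); $\phi_1$ is such a solution, normalized so that the function $(x,t)\mapsto\phi_1(\|x\|)$ has $L^2$ norm $1$ on $B_1\times[0,2\pi]$. $\sigma(T)$ coincides with the eigenvalue of the linearized operator $H_T$ on $\cos t$. *)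

From Stdlib Require Import Reals ZArith.
Open Scope R_scope.

Definition Sk (k : Z) (r : R) : R := if Z.eqb k 1%Z then sin r else sinh r.
Definition Ck (k : Z) (r : R) : R := if Z.eqb k 1%Z then cos r else cosh r.

(* Area of the unit m-sphere S^m in R^(m+1): |S^0| = 2, |S^1| = 2 pi,
   |S^(m+2)| = 2 pi / (m+1) * |S^m|. *)
Fixpoint sphere_area (m : nat) : R :=
  match m with
  | O => 2
  | S O => 2 * PI
  | S (S p as q) => 2 * PI / INR q * sphere_area p
  end.

Definition radial_ode (n : nat) (k : Z) (mu : R) (u u1 u2 : R -> R) (r : R) : Prop :=
  u2 r + (INR n - 1) * (Ck k r / Sk k r) * u1 r + mu * u r = 0.

Definition twice_diff_on (u u1 u2 : R -> R) : Prop :=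
  forall r, 0 < r <= 1 -> derivable_pt_lim u r (u1 r) /\ derivable_pt_lim u1 r (u2 r).

Definition right_cont_at_0 (u : R -> R) : Prop :=
  forall eps, 0 < eps -> exists d, 0 < d /\ forall r, 0 < r < d -> Rabs (u r - u 0) < eps.

Definition dir_eigfun (n : nat) (k : Z) (mu : R) (u u1 u2 : R -> R) : Prop :=
  twice_diff_on u u1 u2 /\
  (forall r, 0 < r < 1 -> radial_ode n k mu u u1 u2 r) /\
  right_cont_at_0 u /\
  (exists B, forall r, 0 < r <= 1 -> Rabs (u r) <= B) /\
  (forall r, 0 <= r < 1 -> 0 < u r) /\
  u 1 = 0.

Definition first_dir_eig (n : nat) (k : Z) (lam : R) : Prop :=
  0 < lam /\
  (exists u u1 u2, dir_eigfun n k lam u u1 u2) /\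
  (forall mu, 0 < mu < lam -> ~ exists u u1 u2, dir_eigfun n k mu u u1 u2).

(* ||(x,t) |-> phi(|x|)||_{L^2(B_1 x [0,2pi])} = 1, in geodesic polar coordinates:
   2 pi * |S^(n-1)| * int_0^1 phi(r)^2 S_k(r)^(n-1) dr = 1. *)
Definition L2_normalized (n : nat) (k : Z) (phi : R -> R) : Prop :=
  exists pr : Riemann_integrable (fun r => (phi r) ^ 2 * (Sk k r) ^ (n - 1)) 0 1,
    2 * PI * sphere_area (n - 1) * RiemannInt pr = 1.

Definition c_sol (n : nat) (k : Z) (lam : R) (phi_1 : R -> R) (T : R)
    (c c1 c2 : R -> R) : Prop :=
  twice_diff_on c c1 c2 /\
  (forall r, 0 < r < 1 -> radial_ode n k (lam - (2 * PI / T) ^ 2) c c1 c2 r) /\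
  right_cont_at_0 c /\
  c 1 = - phi_1 1.

From Stdlib Require Import Reals ZArith Lra Lia Psatz.
From Coquelicot Require Import Coquelicot.
Open Scope R_scope.

(* With m = n - 1 and w = S_k^m, the radial equation reads (w u')' = - mu w u, so
   the flux w u' and the Wronskian w (v' u - v u') have explicit derivatives; for
   solutions continuous at 0 both vanish at r = 0 (else u grows like log r).
   Section Radial derives from this phi_1'(1) < 0 (Hopf), positivity of solutions
   with u(0) > 0 when mu < lambda_1 (Sturm comparison with phi_1), proportionality
   of solutions with equal mu, and two estimates of c'(1): a lower bound
   ~ sqrt(-mu) c(1) for mu <= -4 and an upper bound ~ -phi_1'(1)^2/(lambda_1 - mu)
   for 0 < mu < lambda_1.  Section RegularSolution builds a solution for every mu
   as a power series in Y = 1 - cos r (resp. cosh r - 1).  Section Sigma: c_T is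
   the positive multiple of it with mu_T = lambda_1 - (2 pi/T)^2, and the two
   estimates give the two limits. *)

(* Derivative rules stated for lambda-terms, so that they apply by unification. *)
Lemma dpl_to f x l l' : derivable_pt_lim f x l -> l = l' -> derivable_pt_lim f x l'.
Proof. intros H ->; exact H. Qed.

Lemma dpl_plus f g x a b : derivable_pt_lim f x a -> derivable_pt_lim g x b ->
  derivable_pt_lim (fun y => f y + g y) x (a + b).
Proof. intros. apply (derivable_pt_lim_plus f g); auto. Qed.

Lemma dpl_minus f g x a b : derivable_pt_lim f x a -> derivable_pt_lim g x b ->
  derivable_pt_lim (fun y => f y - g y) x (a - b).
Proof. intros. apply (derivable_pt_lim_minus f g); auto. Qed.

Lemma dpl_mult f g x a b : derivable_pt_lim f x a -> derivable_pt_lim g x b ->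
  derivable_pt_lim (fun y => f y * g y) x (a * g x + f x * b).
Proof. intros. apply (derivable_pt_lim_mult f g); auto. Qed.

Lemma dpl_div f g x a b : derivable_pt_lim f x a -> derivable_pt_lim g x b -> g x <> 0 ->
  derivable_pt_lim (fun y => f y / g y) x ((a * g x - b * f x) / (g x) ^ 2).
Proof.
  intros. apply (dpl_to _ _ ((a * g x - b * f x) / Rsqr (g x))).
  - apply (derivable_pt_lim_div f g); auto.
  - unfold Rsqr; simpl; field; auto.
Qed.

Lemma dpl_comp f g x a b : derivable_pt_lim f x a -> derivable_pt_lim g (f x) b ->
  derivable_pt_lim (fun y => g (f y)) x (b * a).
Proof. intros. apply (derivable_pt_lim_comp f g); auto. Qed.

Lemma nondecr_of_deriv (f f' : R -> R) a b : a <= b ->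
  (forall c, a <= c <= b -> derivable_pt_lim f c (f' c)) ->
  (forall c, a < c < b -> 0 <= f' c) -> f a <= f b.
Proof.
  intros Hab Hd Hs. destruct (Rle_lt_or_eq_dec _ _ Hab) as [H|H]; [|subst; lra].
  destruct (MVT_cor2 f f' a b H Hd) as [c [E Hc]].
  specialize (Hs c Hc). nra.
Qed.

Lemma incr_of_deriv (f f' : R -> R) a b : a < b ->
  (forall c, a <= c <= b -> derivable_pt_lim f c (f' c)) ->
  (forall c, a < c < b -> 0 < f' c) -> f a < f b.
Proof.
  intros H Hd Hs.
  destruct (MVT_cor2 f f' a b H Hd) as [c [E Hc]].
  specialize (Hs c Hc). nra.
Qed.

Lemma lipschitz_of_deriv (f f' : R -> R) a b K : a <= b ->
  (forall c, a <= c <= b -> derivable_pt_lim f c (f' c)) ->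
  (forall c, a < c < b -> Rabs (f' c) <= K) -> Rabs (f b - f a) <= K * (b - a).
Proof.
  intros Hab Hd Hs. destruct (Rle_lt_or_eq_dec _ _ Hab) as [H|H].
  - destruct (MVT_cor2 f f' a b H Hd) as [c [E Hc]].
    specialize (Hs c Hc). rewrite E, Rabs_mult, (Rabs_right (b - a)) by lra.
    apply Rmult_le_compat_r; lra.
  - subst. rewrite Rminus_diag, Rabs_R0. lra.
Qed.

Lemma const_of_deriv_0 (f : R -> R) a b : 0 < a <= b ->
  (forall c, 0 < c <= b -> derivable_pt_lim f c 0) -> f a = f b.
Proof.
  intros Hab Hd. apply Rle_antisym.
  - apply (nondecr_of_deriv f (fun _ => 0)); [lra| |].
    + intros c Hc. apply Hd. lra.
    + intros; lra.
  - assert (- f a <= - f b); [|lra].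
    apply (nondecr_of_deriv (fun y => - f y) (fun _ => - 0)); [lra| |].
    + intros c Hc. apply derivable_pt_lim_opp, Hd. lra.
    + intros; lra.
Qed.

Definition vanishes_at_0 (f : R -> R) : Prop :=
  forall eps, 0 < eps -> exists d, 0 < d /\ forall r, 0 < r < d -> Rabs (f r) < eps.

Lemma vanishes_nondecr_nonneg f x : vanishes_at_0 f -> 0 < x ->
  (forall r, 0 < r < x -> f r <= f x) -> 0 <= f x.
Proof.
  intros Hl Hx Hm. destruct (Rle_or_lt 0 (f x)) as [H|H]; auto.
  destruct (Hl (- f x)) as [d [Hd Hr]]; [lra|].
  set (r := Rmin (d / 2) (x / 2)).
  assert (0 < r /\ r < d /\ r < x).
  { unfold r. pose proof (Rmin_l (d / 2) (x / 2)). pose proof (Rmin_r (d / 2) (x / 2)).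
    split; [apply Rmin_pos|]; lra. }
  specialize (Hr r ltac:(lra)). specialize (Hm r ltac:(lra)).
  apply Rabs_def2 in Hr. lra.
Qed.

Lemma vanishes_deriv_nonneg f f' x : vanishes_at_0 f -> 0 < x ->
  (forall c, 0 < c <= x -> derivable_pt_lim f c (f' c)) ->
  (forall c, 0 < c < x -> 0 <= f' c) -> 0 <= f x.
Proof.
  intros Hl Hx Hd Hs. apply vanishes_nondecr_nonneg; auto.
  intros r Hr. apply (nondecr_of_deriv f f'); [lra| |].
  - intros c Hc. apply Hd. lra.
  - intros c Hc. apply Hs. lra.
Qed.

Lemma vanishes_deriv_nonpos f f' x : vanishes_at_0 f -> 0 < x ->
  (forall c, 0 < c <= x -> derivable_pt_lim f c (f' c)) ->
  (forall c, 0 < c < x -> f' c <= 0) -> f x <= 0.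
Proof.
  intros Hl Hx Hd Hs. assert (0 <= - f x); [|lra].
  apply (vanishes_deriv_nonneg (fun r => - f r) (fun r => - f' r)); auto.
  - intros e He. destruct (Hl e He) as [d [Hd' Hr]]. exists d; split; auto.
    intros r Hr'. rewrite Rabs_Ropp. auto.
  - intros c Hc. apply derivable_pt_lim_opp, Hd. exact Hc.
  - intros c Hc. specialize (Hs c Hc). lra.
Qed.

Lemma vanishes_lin f g a : vanishes_at_0 f -> vanishes_at_0 g ->
  vanishes_at_0 (fun x => f x + a * g x).
Proof.
  intros Hf Hg eps He.
  assert (Ha : 0 < Rabs a + 1) by (pose proof (Rabs_pos a); lra).
  destruct (Hf (eps / 2)) as [d1 [Hd1 H1]]; [lra|].
  destruct (Hg (eps / (2 * (Rabs a + 1)))) as [d2 [Hd2 H2]]; [apply Rdiv_lt_0_compat; lra|].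
  exists (Rmin d1 d2). split; [apply Rmin_pos; lra|].
  intros r Hr. pose proof (Rmin_l d1 d2). pose proof (Rmin_r d1 d2).
  specialize (H1 r ltac:(lra)). specialize (H2 r ltac:(lra)).
  apply (Rle_lt_trans _ _ _ (Rabs_triang _ _)). rewrite Rabs_mult.
  assert (Hab : Rabs a * Rabs (g r) <= (Rabs a + 1) * (eps / (2 * (Rabs a + 1)))).
  { apply Rmult_le_compat; try apply Rabs_pos; lra. }
  replace ((Rabs a + 1) * (eps / (2 * (Rabs a + 1)))) with (eps / 2) in Hab by (field; lra).
  lra.
Qed.

Lemma continuity_pt_eps f x0 : continuity_pt f x0 -> forall eps, 0 < eps ->
  exists alp, 0 < alp /\ forall x, Rabs (x - x0) < alp -> Rabs (f x - f x0) < eps.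
Proof.
  intros H eps He. destruct (H eps He) as [alp [Ha Hx]]. exists alp; split; auto.
  intros x Hxa. destruct (Req_dec x x0) as [->|Hne].
  - rewrite Rminus_diag, Rabs_R0; auto.
  - apply (Hx x). split; [split; [exact I| auto]|]. exact Hxa.
Qed.

Lemma right_cont_of_cont f : continuity_pt f 0 -> right_cont_at_0 f.
Proof.
  intros H eps He. destruct (continuity_pt_eps f 0 H eps He) as [a [Ha Ha']].
  exists a; split; auto. intros r Hr. apply Ha'. rewrite Rminus_0_r, Rabs_right; lra.
Qed.

Lemma bounded_near_0 v : right_cont_at_0 v ->
  exists d, 0 < d <= 1 /\ forall r, 0 < r < d -> Rabs (v r) <= Rabs (v 0) + 1.
Proof.
  intros H. destruct (H 1 ltac:(lra)) as [d [Hd Hr]]. exists (Rmin d 1). split.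
  - split; [apply Rmin_pos; lra| apply Rmin_r].
  - intros r Hr'. pose proof (Rmin_l d 1).
    specialize (Hr r ltac:(lra)). pose proof (Rabs_triang_inv (v r) (v 0)). lra.
Qed.

Lemma first_zero f b : 0 < b -> (forall x, 0 < x <= b -> continuity_pt f x) ->
  right_cont_at_0 f -> 0 < f 0 -> (exists x, 0 < x <= b /\ f x <= 0) ->
  exists z, 0 < z <= b /\ f z = 0 /\ forall t, 0 <= t < z -> 0 < f t.
Proof.
  intros Hb Hc Hr H0 [x0 [Hx0 Hfx0]].
  set (E := fun x => 0 <= x /\ forall t, 0 <= t <= x -> 0 < f t).
  assert (HE : forall y, E y -> y < x0).
  { intros y [Hy Hy']. destruct (Rlt_or_le y x0) as [|Hle]; auto.
    specialize (Hy' x0 ltac:(lra)). lra. }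
  assert (HE0 : E 0) by (split; [lra|]; intros t Ht; replace t with 0 by lra; auto).
  destruct (completeness E (ex_intro _ x0 (fun y Hy => Rlt_le _ _ (HE y Hy))) (ex_intro _ 0 HE0))
    as [z [Hz1 Hz2]].
  assert (Hzx0 : z <= x0) by (apply Hz2; intros y Hy; left; auto).
  assert (Hbelow : forall t, 0 <= t < z -> 0 < f t).
  { intros t Ht. destruct (Rlt_or_le 0 (f t)) as [|Hft]; auto. exfalso.
    assert (z <= t); [|lra]. apply Hz2. intros y [Hy Hy'].
    destruct (Rle_or_lt y t) as [|Hlt]; auto. specialize (Hy' t ltac:(lra)). lra. }
  assert (Hzpos : 0 < z).
  { destruct (Hr (f 0) H0) as [d [Hd Hd']].
    assert (d / 2 <= z); [|lra]. apply Hz1. split; [lra|].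
    intros t Ht. destruct (Req_dec t 0) as [->|]; auto.
    specialize (Hd' t ltac:(lra)). apply Rabs_def2 in Hd'. lra. }
  exists z. split; [lra|]. split; auto.
  destruct (Rtotal_order (f z) 0) as [Hn|[Hz|Hp]]; auto; exfalso.
  - destruct (continuity_pt_eps f z (Hc z ltac:(lra)) (- f z) ltac:(lra)) as [a [Ha Ha']].
    set (t := Rmax 0 (z - a / 2)).
    assert (0 <= t /\ t < z /\ z - a / 2 <= t)
      by (unfold t; split; [apply Rmax_l|split; [apply Rmax_lub_lt; lra|apply Rmax_r]]).
    specialize (Hbelow t ltac:(lra)).
    specialize (Ha' t ltac:(apply Rabs_def1; lra)). apply Rabs_def2 in Ha'. lra.
  - destruct (continuity_pt_eps f z (Hc z ltac:(lra)) (f z) Hp) as [a [Ha Ha']].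
    assert (z + a / 2 <= z); [|lra]. apply Hz1. split; [lra|].
    intros t Ht. destruct (Rlt_or_le t z) as [Hlt|Hge]; [apply Hbelow; lra|].
    specialize (Ha' t ltac:(apply Rabs_def1; lra)). apply Rabs_def2 in Ha'. lra.
Qed.

Lemma deriv_nonpos_at_first_zero f l z : 0 < z -> derivable_pt_lim f z l -> f z = 0 ->
  (forall t, 0 <= t < z -> 0 < f t) -> l <= 0.
Proof.
  intros Hz Hd Hfz Hpos. destruct (Rle_or_lt l 0) as [|Hl]; auto. exfalso.
  destruct (Hd l Hl) as [d Hd'].
  pose proof (cond_pos d).
  set (h := - Rmin (d / 2) (z / 2)).
  assert (Hh : 0 < - h /\ - h < d /\ - h <= z / 2).
  { unfold h. rewrite Ropp_involutive. pose proof (Rmin_l (d / 2) (z / 2)).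
    pose proof (Rmin_r (d / 2) (z / 2)). split; [apply Rmin_pos|]; lra. }
  specialize (Hd' h ltac:(lra) ltac:(rewrite Rabs_left by lra; lra)).
  rewrite Hfz, Rminus_0_r in Hd'. specialize (Hpos (z + h) ltac:(lra)).
  apply Rabs_def2 in Hd'.
  assert (f (z + h) / h < 0) by (apply Rdiv_pos_neg; lra).
  lra.
Qed.

(* Y_k = 1 - cos (resp. cosh - 1): the variable of the power series below,
   with Y_k' = S_k, S_k^2 = Y_k (2 - k Y_k) and C_k = 1 - k Y_k. *)
Definition Yk (k : Z) (r : R) : R := if Z.eqb k 1 then 1 - cos r else cosh r - 1.

Section SpaceForm.
Variable k : Z.
Hypothesis Hk : k = 1%Z \/ k = (-1)%Z.

Lemma Sk_deriv r : derivable_pt_lim (Sk k) r (Ck k r).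
Proof.
  destruct Hk as [-> | ->]; unfold Sk, Ck; simpl.
  - apply derivable_pt_lim_sin.
  - apply derivable_pt_lim_sinh.
Qed.

Lemma Yk_deriv r : derivable_pt_lim (Yk k) r (Sk k r).
Proof.
  destruct Hk as [-> | ->]; unfold Sk, Yk; simpl.
  - apply (dpl_to _ _ (0 - - sin r)); [|ring].
    apply derivable_pt_lim_minus; [apply derivable_pt_lim_const|apply derivable_pt_lim_cos].
  - apply (dpl_to _ _ (sinh r - 0)); [|ring].
    apply derivable_pt_lim_minus; [apply derivable_pt_lim_cosh|apply derivable_pt_lim_const].
Qed.

Lemma Sk_0 : Sk k 0 = 0.
Proof.
  destruct Hk as [-> | ->]; unfold Sk; simpl; [apply sin_0|].
  unfold sinh. rewrite Ropp_0, exp_0. field.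
Qed.

Lemma Yk_0 : Yk k 0 = 0.
Proof.
  destruct Hk as [-> | ->]; unfold Yk; simpl; [rewrite cos_0; ring|].
  unfold cosh. rewrite Ropp_0, exp_0. field.
Qed.

Lemma Sk_pos r : 0 < r <= 1 -> 0 < Sk k r.
Proof.
  intros Hr. pose proof PI2_1.
  destruct Hk as [-> | ->]; unfold Sk; simpl.
  - apply sin_gt_0; lra.
  - unfold sinh. assert (exp (- r) < exp r) by (apply exp_increasing; lra). lra.
Qed.

Lemma Sk_nonneg r : 0 <= r <= 1 -> 0 <= Sk k r.
Proof.
  intros Hr. destruct (Req_dec r 0) as [->|]; [rewrite Sk_0; lra|].
  left; apply Sk_pos; lra.
Qed.

Lemma Ck_bounds r : 0 <= r <= 1 -> 0 < Ck k r <= 2.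
Proof.
  intros Hr. pose proof PI2_1.
  destruct Hk as [-> | ->]; unfold Ck; simpl.
  - split; [apply cos_gt_0; lra|]. pose proof (COS_bound r). lra.
  - assert (exp r <= exp 1)
      by (destruct (Req_dec r 1) as [->|]; [lra|left; apply exp_increasing; lra]).
    assert (exp (- r) <= exp 0)
      by (destruct (Req_dec r 0) as [->|]; [rewrite Ropp_0; lra|left; apply exp_increasing; lra]).
    pose proof exp_le_3. pose proof (exp_pos r). pose proof (exp_pos (- r)).
    rewrite exp_0 in *. unfold cosh. lra.
Qed.

Lemma Sk_sq r : Sk k r ^ 2 = Yk k r * (2 - IZR k * Yk k r).
Proof.
  destruct Hk as [-> | ->]; unfold Sk, Yk; simpl.
  - pose proof (sin2_cos2 r). unfold Rsqr in *. nra.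
  - unfold sinh, cosh. pose proof (exp_plus r (- r)) as E.
    replace (r + - r) with 0 in E by ring. rewrite exp_0 in E. nra.
Qed.

Lemma Ck_Yk r : Ck k r = 1 - IZR k * Yk k r.
Proof. destruct Hk as [-> | ->]; unfold Ck, Yk; simpl; ring. Qed.

Lemma Yk_bound r : 0 <= r <= 1 -> Rabs (Yk k r) <= 1.
Proof.
  intros Hr. pose proof (Ck_bounds r Hr) as Hc. rewrite Ck_Yk in Hc.
  apply Rabs_le_between. destruct Hk as [-> | ->]; simpl in Hc; lra.
Qed.

Lemma Sk_le_2r r : 0 <= r <= 1 -> Sk k r <= 2 * r.
Proof.
  intros Hr.
  assert (H : 2 * 0 - Sk k 0 <= 2 * r - Sk k r).
  { apply (nondecr_of_deriv (fun x => 2 * x - Sk k x) (fun x => 2 * 1 - Ck k x)); [lra| |].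
    - intros c Hc. apply dpl_minus; [|apply Sk_deriv].
      apply derivable_pt_lim_scal, derivable_pt_lim_id.
    - intros c Hc. pose proof (Ck_bounds c ltac:(lra)). lra. }
  rewrite Sk_0 in H. lra.
Qed.

Lemma Sk_mono r s : 0 <= r <= s -> s <= 1 -> Sk k r <= Sk k s.
Proof.
  intros H1 H2. apply (nondecr_of_deriv _ (Ck k)); [lra| |].
  - intros c _. apply Sk_deriv.
  - intros c Hc. pose proof (Ck_bounds c ltac:(lra)). lra.
Qed.
End SpaceForm.

(* A function whose derivative is at least A/s on (0,r] grows like A ln s,
   so it cannot stay bounded: this is what forces fluxes to vanish at 0. *)
Lemma no_log_blowup v v1 A V r : 0 < r -> 0 < A ->
  (forall s, 0 < s <= r -> derivable_pt_lim v s (v1 s)) ->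
  (forall s, 0 < s <= r -> A / s <= v1 s) ->
  (forall s, 0 < s <= r -> Rabs (v s) <= V) -> False.
Proof.
  intros Hr HA Hd Hv1 Hb.
  set (s := r * exp (- ((2 * V + 1) / A))).
  assert (HV : 0 <= V) by (pose proof (Hb r ltac:(lra)); pose proof (Rabs_pos (v r)); lra).
  assert (Hs : 0 < s < r).
  { assert (exp (- ((2 * V + 1) / A)) < exp 0).
    { apply exp_increasing. assert (0 < (2 * V + 1) / A) by (apply Rdiv_lt_0_compat; lra). lra. }
    rewrite exp_0 in *. pose proof (exp_pos (- ((2 * V + 1) / A))). unfold s. nra. }
  assert (Hln : ln s = ln r - (2 * V + 1) / A).
  { unfold s. rewrite ln_mult, ln_exp by (try apply exp_pos; lra). ring. }
  assert (Hgrow : v s - A * ln s <= v r - A * ln r).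
  { apply (nondecr_of_deriv (fun x => v x - A * ln x) (fun x => v1 x - A * / x)); [lra| |].
    - intros c Hc. apply dpl_minus; [apply Hd; lra|].
      apply derivable_pt_lim_scal, derivable_pt_lim_ln; lra.
    - intros c Hc. specialize (Hv1 c ltac:(lra)). unfold Rdiv in Hv1. lra. }
  rewrite Hln in Hgrow.
  replace (A * (ln r - (2 * V + 1) / A)) with (A * ln r - (2 * V + 1)) in Hgrow by (field; lra).
  pose proof (proj1 (Rabs_le_between _ _) (Hb s ltac:(lra))).
  pose proof (proj1 (Rabs_le_between _ _) (Hb r ltac:(lra))). lra.
Qed.

Section Radial.
Variables (n : nat) (k : Z) (m : nat).
Hypothesis Hk : k = 1%Z \/ k = (-1)%Z.
Hypothesis Hm : (1 <= m)%nat.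
Hypothesis Hnm : INR n - 1 = INR m.

(* The weight w = S_k^m (the area density of geodesic spheres) and w'. *)
Definition weight r := Sk k r ^ m.
Definition dweight r := INR m * Sk k r ^ pred m * Ck k r.

Lemma weight_deriv r : derivable_pt_lim weight r (dweight r).
Proof.
  unfold weight, dweight. apply (derivable_pt_lim_comp (Sk k) (fun y => y ^ m)).
  - apply Sk_deriv; auto.
  - apply derivable_pt_lim_pow.
Qed.

(* w = S_k^(m-1) S_k, to cancel the factor 1/S_k of the equation. *)
Lemma weight_split r : weight r = Sk k r ^ pred m * Sk k r.
Proof. unfold weight. destruct m as [|p]; [lia|]. simpl. ring. Qed.

Lemma weight_pos r : 0 < r <= 1 -> 0 < weight r.
Proof. intros H. unfold weight. apply pow_lt, Sk_pos; auto. Qed.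

Lemma weight_mono r s : 0 <= r <= s -> s <= 1 -> weight r <= weight s.
Proof.
  intros H1 H2. unfold weight. apply pow_incr. split.
  - apply Sk_nonneg; auto; lra.
  - apply Sk_mono; auto.
Qed.

Lemma weight_le r : 0 <= r <= 1 -> 0 <= weight r <= 2 ^ m * r.
Proof.
  intros H. rewrite weight_split. destruct m as [|p]; [lia|]. simpl pred.
  pose proof (Sk_le_2r k Hk r H). pose proof (Sk_nonneg k Hk r H).
  assert (Sk k r ^ p <= 2 ^ p) by (apply pow_incr; lra).
  assert (0 <= Sk k r ^ p) by (apply pow_le; lra).
  simpl. split; nra.
Qed.

Lemma weight_le_pow r : 0 <= r <= 1 -> weight r <= 2 ^ m.
Proof. intros H. pose proof (weight_le r H). assert (0 < 2 ^ m) by (apply pow_lt; lra). nra. Qed.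

Definition radial_sol mu (v v1 v2 : R -> R) :=
  twice_diff_on v v1 v2 /\ (forall r, 0 < r < 1 -> radial_ode n k mu v v1 v2 r) /\
  right_cont_at_0 v.

Lemma radial_sol_scal mu v v1 v2 a : radial_sol mu v v1 v2 ->
  radial_sol mu (fun x => a * v x) (fun x => a * v1 x) (fun x => a * v2 x).
Proof.
  intros [H1 [H2 H3]]. split; [|split].
  - intros r Hr. destruct (H1 r Hr). split; apply derivable_pt_lim_scal; auto.
  - intros r Hr. specialize (H2 r Hr). unfold radial_ode in *.
    replace (a * v2 r + (INR n - 1) * (Ck k r / Sk k r) * (a * v1 r) + mu * (a * v r))
      with (a * (v2 r + (INR n - 1) * (Ck k r / Sk k r) * v1 r + mu * v r)) by ring.
    rewrite H2; ring.
  - intros e He. destruct (H3 (e / (Rabs a + 1))) as [d [Hd Hr]].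
    { apply Rdiv_lt_0_compat; [lra|]. pose proof (Rabs_pos a). lra. }
    exists d; split; auto. intros r Hr'. specialize (Hr r Hr').
    replace (a * v r - a * v 0) with (a * (v r - v 0)) by ring. rewrite Rabs_mult.
    assert (Ha : 0 < Rabs a + 1) by (pose proof (Rabs_pos a); lra).
    apply (Rle_lt_trans _ ((Rabs a + 1) * Rabs (v r - v 0))).
    + apply Rmult_le_compat_r; [apply Rabs_pos|lra].
    + apply (Rmult_lt_compat_l (Rabs a + 1)) in Hr; [|lra].
      replace ((Rabs a + 1) * (e / (Rabs a + 1))) with e in Hr by (field; lra). exact Hr.
Qed.

Lemma radial_sol_of_eigfun lam u u1 u2 : dir_eigfun n k lam u u1 u2 -> radial_sol lam u u1 u2.
Proof. intros [H1 [H2 [H3 _]]]. split; auto. Qed.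

Lemma radial_sol_cont mu v v1 v2 x : radial_sol mu v v1 v2 -> 0 < x <= 1 -> continuity_pt v x.
Proof. intros [H _] Hx. apply derivable_continuous_pt. exists (v1 x). apply (H x Hx). Qed.

Definition flux (v1 : R -> R) r := weight r * v1 r.
Definition dflux (v1 v2 : R -> R) r := dweight r * v1 r + weight r * v2 r.

Lemma flux_deriv mu v v1 v2 r : radial_sol mu v v1 v2 -> 0 < r <= 1 ->
  derivable_pt_lim (flux v1) r (dflux v1 v2 r).
Proof. intros [H1 _] Hr. apply dpl_mult; [apply weight_deriv|apply (H1 r Hr)]. Qed.

Lemma dflux_eq mu v v1 v2 r : radial_sol mu v v1 v2 -> 0 < r < 1 ->
  dflux v1 v2 r = - mu * weight r * v r.
Proof.
  intros [_ [H2 _]] Hr. specialize (H2 r Hr). unfold radial_ode in H2. rewrite Hnm in H2.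
  assert (0 < Sk k r) by (apply Sk_pos; auto; lra).
  assert (E : v2 r = - (INR m * (Ck k r / Sk k r) * v1 r + mu * v r)) by lra.
  unfold dflux, dweight. rewrite E, weight_split. field. lra.
Qed.

Definition wronskian (v v1 u u1 : R -> R) r := weight r * (v1 r * u r - v r * u1 r).
Definition dwronskian (v v1 v2 u u1 u2 : R -> R) r :=
  dweight r * (v1 r * u r - v r * u1 r) + weight r * (v2 r * u r - v r * u2 r).

Lemma wronskian_deriv mu1 mu2 v v1 v2 u u1 u2 r :
  radial_sol mu1 v v1 v2 -> radial_sol mu2 u u1 u2 -> 0 < r <= 1 ->
  derivable_pt_lim (wronskian v v1 u u1) r (dwronskian v v1 v2 u u1 u2 r).
Proof.
  intros [Hv _] [Hu _] Hr. destruct (Hv r Hr) as [A1 A2]. destruct (Hu r Hr) as [B1 B2].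
  unfold wronskian, dwronskian.
  apply (dpl_to _ _ (dweight r * (v1 r * u r - v r * u1 r) +
    weight r * ((v2 r * u r + v1 r * u1 r) - (v1 r * u1 r + v r * u2 r)))); [|ring].
  apply (dpl_mult weight (fun y => v1 y * u y - v y * u1 y)); [apply weight_deriv|].
  apply (dpl_minus (fun y => v1 y * u y) (fun y => v y * u1 y)); apply dpl_mult; auto.
Qed.

Lemma dwronskian_eq mu1 mu2 v v1 v2 u u1 u2 r :
  radial_sol mu1 v v1 v2 -> radial_sol mu2 u u1 u2 -> 0 < r < 1 ->
  dwronskian v v1 v2 u u1 u2 r = (mu2 - mu1) * weight r * v r * u r.
Proof.
  intros [_ [Hv _]] [_ [Hu _]] Hr. specialize (Hv r Hr). specialize (Hu r Hr).
  unfold radial_ode in *. rewrite Hnm in *.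
  assert (0 < Sk k r) by (apply Sk_pos; auto; lra).
  assert (E : v2 r = - (INR m * (Ck k r / Sk k r) * v1 r + mu1 * v r)) by lra.
  assert (E' : u2 r = - (INR m * (Ck k r / Sk k r) * u1 r + mu2 * u r)) by lra.
  unfold dwronskian, dweight. rewrite E, E', weight_split. field. lra.
Qed.

Lemma flux_lipschitz mu v v1 v2 V d s r : radial_sol mu v v1 v2 -> d <= 1 ->
  (forall x, 0 < x < d -> Rabs (v x) <= V) -> 0 < s <= r -> r < d ->
  Rabs (flux v1 r - flux v1 s) <= Rabs mu * 2 ^ m * V * (r - s).
Proof.
  intros Hs Hd Hb Hsr Hr.
  apply (lipschitz_of_deriv _ (dflux v1 v2)); [lra| |].
  - intros c Hc. apply (flux_deriv mu v); auto; lra.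
  - intros c Hc. rewrite (dflux_eq mu v v1 v2) by (auto; lra).
    rewrite !Rabs_mult, Rabs_Ropp.
    pose proof (weight_le c ltac:(lra)). pose proof (weight_le_pow c ltac:(lra)).
    rewrite (Rabs_right (weight c)) by lra.
    pose proof (Hb c ltac:(lra)). pose proof (Rabs_pos mu). pose proof (Rabs_pos (v c)).
    apply Rmult_le_compat; [apply Rmult_le_pos; lra|lra|apply Rmult_le_compat_l; lra|lra].
Qed.

(* The flux of a solution continuous at 0 is eventually below any eps > 0:
   otherwise it stays above eps/2 near 0, so v' >= eps / (2^(m+1) s) and v
   would blow up logarithmically. *)
Lemma flux_eventually_below mu v v1 v2 : radial_sol mu v v1 v2 -> forall eps, 0 < eps ->
  exists d, 0 < d /\ forall r, 0 < r < d -> flux v1 r < eps.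
Proof.
  intros Hs eps He. pose proof Hs as [Hd _].
  destruct (bounded_near_0 v (proj2 (proj2 Hs))) as [d0 [Hd0 Hb]].
  set (V := Rabs (v 0) + 1). fold V in Hb.
  assert (HV : 0 < V) by (unfold V; pose proof (Rabs_pos (v 0)); lra).
  assert (H2m : 0 < 2 ^ m) by (apply pow_lt; lra).
  set (L := Rabs mu * 2 ^ m * V).
  assert (HL : 0 <= L) by (unfold L; pose proof (Rabs_pos mu); repeat apply Rmult_le_pos; lra).
  set (K := L + 1).
  assert (HK : 1 <= K) by (unfold K; lra).
  exists (Rmin d0 (eps / (2 * K))). split; [apply Rmin_pos; [lra|apply Rdiv_lt_0_compat; lra]|].
  intros r Hr. destruct (Rlt_or_le (flux v1 r) eps) as [|Hge]; auto. exfalso.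
  pose proof (Rmin_l d0 (eps / (2 * K))). pose proof (Rmin_r d0 (eps / (2 * K))).
  assert (HrK : r * K < eps / 2).
  { assert (Hr' : r < eps / (2 * K)) by lra.
    apply (Rmult_lt_compat_r K) in Hr'; [|lra].
    replace (eps / (2 * K) * K) with (eps / 2) in Hr' by (field; lra). lra. }
  set (A := eps / (2 * 2 ^ m)).
  apply (no_log_blowup v v1 A V r); [lra|unfold A; apply Rdiv_lt_0_compat; lra| | |].
  - intros s Hs0. apply Hd; lra.
  - intros s Hs0.
    assert (Hfl : eps / 2 <= flux v1 s).
    { pose proof (flux_lipschitz mu v v1 v2 V d0 s r Hs ltac:(lra) Hb Hs0 ltac:(lra)) as HLip.
      fold L in HLip. apply Rabs_le_between in HLip.
      assert (L * (r - s) <= r * K) by (unfold K; nra). lra. }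
    unfold flux in Hfl. pose proof (weight_pos s ltac:(lra)). pose proof (weight_le s ltac:(lra)).
    assert (0 < v1 s) by nra.
    unfold A. apply (Rmult_le_reg_r (2 * 2 ^ m * s)); [nra|].
    replace (eps / (2 * 2 ^ m) / s * (2 * 2 ^ m * s)) with eps by (field; lra). nra.
  - intros s Hs0. apply Hb. lra.
Qed.

(* Applying this to v and -v: the flux tends to 0 at 0+. *)
Lemma flux_vanishes mu v v1 v2 : radial_sol mu v v1 v2 -> vanishes_at_0 (flux v1).
Proof.
  intros Hs eps He.
  destruct (flux_eventually_below mu v v1 v2 Hs eps He) as [d1 [Hd1 H1]].
  destruct (flux_eventually_below mu _ _ _ (radial_sol_scal mu v v1 v2 (-1) Hs) eps He)
    as [d2 [Hd2 H2]].
  exists (Rmin d1 d2). split; [apply Rmin_pos; lra|].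
  intros r Hr. pose proof (Rmin_l d1 d2). pose proof (Rmin_r d1 d2).
  specialize (H1 r ltac:(lra)). specialize (H2 r ltac:(lra)). unfold flux in *.
  apply Rabs_def1; lra.
Qed.

Lemma wronskian_vanishes mu1 mu2 v v1 v2 u u1 u2 :
  radial_sol mu1 v v1 v2 -> radial_sol mu2 u u1 u2 -> vanishes_at_0 (wronskian v v1 u u1).
Proof.
  intros Hv Hu.
  destruct (bounded_near_0 v (proj2 (proj2 Hv))) as [dv [Hdv Hbv]].
  destruct (bounded_near_0 u (proj2 (proj2 Hu))) as [du [Hdu Hbu]].
  set (V := Rabs (v 0) + 1) in Hbv. set (U := Rabs (u 0) + 1) in Hbu.
  assert (0 < V) by (unfold V; pose proof (Rabs_pos (v 0)); lra).
  assert (0 < U) by (unfold U; pose proof (Rabs_pos (u 0)); lra).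
  assert (Hlim : vanishes_at_0 (fun r => flux v1 r * u r - v r * flux u1 r)).
  { intros eps He.
    destruct (flux_vanishes mu1 v v1 v2 Hv (eps / (4 * U))) as [d1 [Hd1 H1]];
      [apply Rdiv_lt_0_compat; lra|].
    destruct (flux_vanishes mu2 u u1 u2 Hu (eps / (4 * V))) as [d2 [Hd2 H2]];
      [apply Rdiv_lt_0_compat; lra|].
    exists (Rmin (Rmin d1 d2) (Rmin dv du)). split; [repeat apply Rmin_pos; lra|].
    intros r Hr. pose proof (Rmin_l d1 d2). pose proof (Rmin_r d1 d2).
    pose proof (Rmin_l dv du). pose proof (Rmin_r dv du).
    pose proof (Rmin_l (Rmin d1 d2) (Rmin dv du)). pose proof (Rmin_r (Rmin d1 d2) (Rmin dv du)).
    specialize (H1 r ltac:(lra)). specialize (H2 r ltac:(lra)).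
    specialize (Hbv r ltac:(lra)). specialize (Hbu r ltac:(lra)).
    apply (Rle_lt_trans _ _ _ (Rabs_triang _ _)). rewrite Rabs_Ropp, !Rabs_mult.
    assert (Rabs (flux v1 r) * Rabs (u r) <= eps / (4 * U) * U)
      by (apply Rmult_le_compat; try apply Rabs_pos; lra).
    assert (Rabs (v r) * Rabs (flux u1 r) <= V * (eps / (4 * V)))
      by (apply Rmult_le_compat; try apply Rabs_pos; lra).
    replace (eps / (4 * U) * U) with (eps / 4) in * by (field; lra).
    replace (V * (eps / (4 * V))) with (eps / 4) in * by (field; lra).
    lra. }
  intros eps He. destruct (Hlim eps He) as [d [Hd Hsmall]]. exists d. split; auto.
  intros r Hr. unfold wronskian. specialize (Hsmall r Hr). unfold flux in Hsmall.
  replace (weight r * (v1 r * u r - v r * u1 r))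
    with (weight r * v1 r * u r - v r * (weight r * u1 r)) by ring. exact Hsmall.
Qed.

(* Hopf lemma: phi_1'(1) < 0, since the flux w phi_1' vanishes at 0 and
   strictly decreases ((w phi_1')' = - lambda_1 w phi_1 < 0). *)
Lemma eigfun_deriv_neg_at_1 lam phi phi1 phi2 : 0 < lam ->
  dir_eigfun n k lam phi phi1 phi2 -> phi1 1 < 0.
Proof.
  intros Hl Hd. pose proof (radial_sol_of_eigfun _ _ _ _ Hd) as Hs.
  destruct Hd as [_ [_ [_ [_ [Hpos _]]]]].
  assert (Hneg : forall c, 0 < c < 1 -> dflux phi1 phi2 c < 0).
  { intros c Hc. rewrite (dflux_eq lam phi) by auto.
    pose proof (weight_pos c ltac:(lra)). pose proof (Hpos c ltac:(lra)).
    assert (0 < lam * weight c * phi c) by (repeat apply Rmult_lt_0_compat; auto). lra. }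
  assert (Hquarter : flux phi1 (1 / 4) <= 0).
  { apply (vanishes_deriv_nonpos _ (dflux phi1 phi2)); [apply (flux_vanishes lam phi phi1 phi2 Hs)|lra| |].
    - intros c Hc. apply (flux_deriv lam phi); auto; lra.
    - intros c Hc. left. apply Hneg. lra. }
  assert (Hdrop : - flux phi1 (1 / 4) < - flux phi1 1).
  { apply (incr_of_deriv (fun x => - flux phi1 x) (fun x => - dflux phi1 phi2 x)); [lra| |].
    - intros c Hc. apply derivable_pt_lim_opp, (flux_deriv lam phi); auto; lra.
    - intros c Hc. specialize (Hneg c ltac:(lra)). lra. }
  pose proof (weight_pos 1 ltac:(lra)). unfold flux in *.
  destruct (Rlt_or_le (phi1 1) 0) as [|Hge]; auto.
  assert (0 <= weight 1 * phi1 1) by (apply Rmult_le_pos; lra). lra.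
Qed.

(* At a first zero z the Wronskian W(v, phi_1), increasing from 0,
   would be positive, while W(z) = w v'(z) phi_1(z) <= 0. *)
Lemma radial_sol_pos lam phi phi1 phi2 mu v v1 v2 :
  dir_eigfun n k lam phi phi1 phi2 -> radial_sol mu v v1 v2 -> mu < lam -> 0 < v 0 ->
  forall r, 0 <= r <= 1 -> 0 < v r.
Proof.
  intros Hd Hs Hmu Hv0.
  enough (Hnz : ~ exists x, 0 < x <= 1 /\ v x <= 0).
  { intros r Hr. destruct (Req_dec r 0) as [->|]; auto.
    destruct (Rlt_or_le 0 (v r)) as [|Hle]; auto. exfalso. apply Hnz. exists r; split; auto; lra. }
  intros Hex. pose proof (radial_sol_of_eigfun _ _ _ _ Hd) as Hps.
  destruct Hd as [_ [_ [_ [_ [Hphipos Hphi1]]]]].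
  destruct (first_zero v 1 ltac:(lra) (fun x Hx => radial_sol_cont mu v v1 v2 x Hs Hx)
              (proj2 (proj2 Hs)) Hv0 Hex) as [z [Hz [Hvz Hbelow]]].
  assert (HWd : forall c, 0 < c <= 1 ->
    derivable_pt_lim (wronskian v v1 phi phi1) c (dwronskian v v1 v2 phi phi1 phi2 c))
    by (intros c Hc; apply (wronskian_deriv mu lam); auto).
  assert (HWpos : forall c, 0 < c < z -> 0 < dwronskian v v1 v2 phi phi1 phi2 c).
  { intros c Hc. rewrite (dwronskian_eq mu lam) by (auto; lra).
    pose proof (weight_pos c ltac:(lra)). pose proof (Hbelow c ltac:(lra)).
    pose proof (Hphipos c ltac:(lra)).
    repeat apply Rmult_lt_0_compat; auto; lra. }
  assert (Hhalf : 0 <= wronskian v v1 phi phi1 (z / 2)).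
  { apply (vanishes_deriv_nonneg _ (dwronskian v v1 v2 phi phi1 phi2));
      [apply (wronskian_vanishes mu lam v v1 v2 phi phi1 phi2); auto|lra| |].
    - intros c Hc. apply HWd. lra.
    - intros c Hc. left. apply HWpos. lra. }
  assert (Hgrow : wronskian v v1 phi phi1 (z / 2) < wronskian v v1 phi phi1 z).
  { apply (incr_of_deriv _ (dwronskian v v1 v2 phi phi1 phi2)); [lra| |].
    - intros c Hc. apply HWd. lra.
    - intros c Hc. apply HWpos. lra. }
  assert (Hv1z : v1 z <= 0)
    by (apply (deriv_nonpos_at_first_zero v (v1 z) z); try lra; auto; apply (proj1 Hs z Hz)).
  assert (Hphiz : 0 <= phi z)
    by (destruct (Req_dec z 1) as [->|]; [lra|left; apply Hphipos; lra]).
  assert (wronskian v v1 phi phi1 z <= 0); [|lra].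
  unfold wronskian. rewrite Hvz. pose proof (weight_pos z Hz).
  assert (v1 z * phi z <= 0) by nra.
  replace (v1 z * phi z - 0 * phi1 z) with (v1 z * phi z) by ring. nra.
Qed.

(* Two solutions with the same mu, the second positive, are proportional:
   their Wronskian is constant and vanishes at 0, so (c/u)' = 0. *)
Lemma radial_sol_proportional mu c c1 c2 u u1 u2 :
  radial_sol mu c c1 c2 -> radial_sol mu u u1 u2 -> (forall r, 0 < r <= 1 -> 0 < u r) ->
  forall r, 0 < r <= 1 -> c r = (c 1 / u 1) * u r.
Proof.
  intros Hc Hu Hpos.
  assert (HWd : forall x, 0 < x <= 1 ->
    derivable_pt_lim (wronskian c c1 u u1) x (dwronskian c c1 c2 u u1 u2 x))
    by (intros x Hx; apply (wronskian_deriv mu mu); auto).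
  assert (HW0 : forall x, 0 < x < 1 -> dwronskian c c1 c2 u u1 u2 x = 0)
    by (intros x Hx; rewrite (dwronskian_eq mu mu) by auto; ring).
  assert (HWvan : vanishes_at_0 (wronskian c c1 u u1))
    by (apply (wronskian_vanishes mu mu c c1 c2 u u1 u2); auto).
  assert (HW : forall x, 0 < x <= 1 -> wronskian c c1 u u1 x = 0).
  { intros x Hx. apply Rle_antisym.
    - apply (vanishes_deriv_nonpos _ (dwronskian c c1 c2 u u1 u2)); auto; [lra| |].
      + intros y Hy. apply HWd. lra.
      + intros y Hy. rewrite HW0 by lra. lra.
    - apply (vanishes_deriv_nonneg _ (dwronskian c c1 c2 u u1 u2)); auto; [lra| |].
      + intros y Hy. apply HWd. lra.
      + intros y Hy. rewrite HW0 by lra. lra. }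
  assert (Hratio : forall x, 0 < x <= 1 -> derivable_pt_lim (fun y => c y / u y) x 0).
  { intros x Hx. pose proof (Hpos x Hx). destruct (proj1 Hc x Hx). destruct (proj1 Hu x Hx).
    apply (dpl_to _ _ ((c1 x * u x - u1 x * c x) / (u x) ^ 2)); [apply dpl_div; auto; lra|].
    specialize (HW x Hx). unfold wronskian in HW. pose proof (weight_pos x Hx).
    assert (c1 x * u x - c x * u1 x = 0).
    { apply (Rmult_eq_reg_l (weight x)); [|lra]. rewrite HW; ring. }
    replace (c1 x * u x - u1 x * c x) with 0 by lra. field. lra. }
  intros r Hr. pose proof (Hpos r Hr). pose proof (Hpos 1 ltac:(lra)).
  rewrite <- (const_of_deriv_0 (fun y => c y / u y) r 1 Hr Hratio). field. lra.
Qed.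

(* For mu < 0 and c > 0 on (0,1] the flux Q = w c' increases, since
   (w c')' = -mu w c > 0 ... *)
Lemma flux_mono_neg_mu mu c c1 c2 : radial_sol mu c c1 c2 ->
  (forall r, 0 < r <= 1 -> 0 < c r) -> mu < 0 ->
  forall s t, 0 < s <= t -> t <= 1 -> flux c1 s <= flux c1 t.
Proof.
  intros Hs Hc Hmu s t Hst Ht. apply (nondecr_of_deriv _ (dflux c1 c2)); [lra| |].
  - intros x Hx. apply (flux_deriv mu c); auto; lra.
  - intros x Hx. rewrite (dflux_eq mu c) by (auto; lra).
    pose proof (weight_pos x ltac:(lra)). pose proof (Hc x ltac:(lra)).
    assert (0 < - mu * weight x * c x) by (repeat apply Rmult_lt_0_compat; lra). lra.
Qed.

(* ... hence, vanishing at 0, it is nonnegative ... *)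
Lemma flux_nonneg_neg_mu mu c c1 c2 : radial_sol mu c c1 c2 ->
  (forall r, 0 < r <= 1 -> 0 < c r) -> mu < 0 ->
  forall x, 0 < x <= 1 -> 0 <= flux c1 x.
Proof.
  intros Hs Hc Hmu x Hx. apply vanishes_nondecr_nonneg; [apply (flux_vanishes mu c c1 c2 Hs)|lra|].
  intros r Hr. apply (flux_mono_neg_mu mu c c1 c2); auto; lra.
Qed.

Lemma sol_mono_neg_mu mu c c1 c2 : radial_sol mu c c1 c2 ->
  (forall r, 0 < r <= 1 -> 0 < c r) -> mu < 0 ->
  forall s t, 0 < s <= t -> t <= 1 -> c s <= c t.
Proof.
  intros Hs Hc Hmu s t Hst Ht. apply (nondecr_of_deriv c c1); [lra| |].
  - intros x Hx. apply (proj1 Hs x). lra.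
  - intros x Hx. pose proof (flux_nonneg_neg_mu mu c c1 c2 Hs Hc Hmu x ltac:(lra)).
    pose proof (weight_pos x ltac:(lra)). unfold flux in *. nra.
Qed.

Lemma flux_gain_neg_mu mu c c1 c2 h : radial_sol mu c c1 c2 ->
  (forall r, 0 < r <= 1 -> 0 < c r) -> mu < 0 -> 0 < h <= 1 / 2 ->
  - mu * weight (1 - h) * c (1 - h) * h <= flux c1 1.
Proof.
  intros Hs Hc Hmu Hh. set (r := 1 - h).
  set (a := - mu * weight r * c r).
  assert (flux c1 r - a * r <= flux c1 1 - a * 1).
  { apply (nondecr_of_deriv (fun x => flux c1 x - a * x) (fun x => dflux c1 c2 x - a * 1));
      [unfold r; lra| |].
    - intros x Hx. apply dpl_minus; [apply (flux_deriv mu c); auto; unfold r in *; lra|].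
      apply derivable_pt_lim_scal, derivable_pt_lim_id.
    - intros x Hx. unfold r in Hx. rewrite (dflux_eq mu c) by (auto; lra).
      pose proof (weight_mono r x ltac:(unfold r; lra) ltac:(lra)).
      pose proof (sol_mono_neg_mu mu c c1 c2 Hs Hc Hmu r x ltac:(unfold r; lra) ltac:(lra)).
      pose proof (weight_pos r ltac:(unfold r; lra)). pose proof (Hc r ltac:(unfold r; lra)).
      assert (a <= - mu * weight x * c x); [|lra].
      unfold a. apply Rmult_le_compat; [|pose proof (Hc r ltac:(unfold r; lra)); lra|nra|lra].
      apply Rmult_le_pos; lra. }
  pose proof (flux_nonneg_neg_mu mu c c1 c2 Hs Hc Hmu r ltac:(unfold r; lra)).
  replace h with (1 - r) by (unfold r; ring). unfold a in *. nra.
Qed.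

Lemma sol_gain_neg_mu mu c c1 c2 h : radial_sol mu c c1 c2 ->
  (forall r, 0 < r <= 1 -> 0 < c r) -> mu < 0 -> 0 < h <= 1 / 2 ->
  c 1 - c (1 - h) <= h * flux c1 1 / weight (1 - h).
Proof.
  intros Hs Hc Hmu Hh. set (r := 1 - h). set (W := weight r).
  assert (HW : 0 < W) by (apply weight_pos; unfold r; lra).
  set (b := flux c1 1 / W).
  assert (b * r - c r <= b * 1 - c 1); [|replace (h * flux c1 1 / W) with (b * (1 - r))
    by (unfold b, r; field; lra); lra].
  apply (nondecr_of_deriv (fun x => b * x - c x) (fun x => b * 1 - c1 x)); [unfold r; lra| |].
  - intros x Hx. apply dpl_minus; [apply derivable_pt_lim_scal, derivable_pt_lim_id|].
    apply (proj1 Hs x). unfold r in Hx; lra.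
  - intros x Hx. unfold r in Hx.
    pose proof (weight_mono r x ltac:(unfold r; lra) ltac:(lra)).
    pose proof (flux_mono_neg_mu mu c c1 c2 Hs Hc Hmu x 1 ltac:(lra) ltac:(lra)).
    pose proof (flux_nonneg_neg_mu mu c c1 c2 Hs Hc Hmu x ltac:(lra)).
    pose proof (weight_pos x ltac:(lra)).
    assert (c1 x * W <= flux c1 1) by (unfold flux, W in *; nra).
    assert (c1 x <= b); [|lra].
    unfold b. apply (Rmult_le_reg_r W); auto. unfold Rdiv. rewrite Rmult_assoc, Rinv_l by lra. lra.
Qed.

(* Taking h = 1/sqrt(-mu): for mu <= -4, c'(1) >= sqrt(-mu) w(1/2) c(1) / 2^(m+1). *)
Lemma sol_deriv_at_1_lower mu c c1 c2 : radial_sol mu c c1 c2 ->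
  (forall r, 0 < r <= 1 -> 0 < c r) -> mu <= -4 ->
  sqrt (- mu) * weight (1 / 2) * c 1 / (2 * 2 ^ m) <= c1 1.
Proof.
  intros Hs Hc Hmu.
  assert (Hsq : 2 <= sqrt (- mu))
    by (replace 2 with (sqrt (2 * 2)) by (rewrite sqrt_square; lra); apply sqrt_le_1_alt; lra).
  set (h := / sqrt (- mu)).
  assert (Hh : 0 < h <= 1 / 2).
  { unfold h. split; [apply Rinv_0_lt_compat; lra|].
    apply (Rmult_le_reg_l (sqrt (- mu))); [lra|]. rewrite Rinv_r by lra. lra. }
  assert (Hmuh : - mu * h = sqrt (- mu))
    by (unfold h; rewrite <- (sqrt_sqrt (- mu)) at 1 by lra; field; lra).
  set (W := weight (1 - h)). set (Q1 := flux c1 1).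
  assert (HW : weight (1 / 2) <= W) by (apply weight_mono; lra).
  pose proof (weight_pos (1 / 2) ltac:(lra)).
  pose proof (flux_gain_neg_mu mu c c1 c2 h Hs Hc ltac:(lra) Hh) as Hflux.
  pose proof (sol_gain_neg_mu mu c c1 c2 h Hs Hc ltac:(lra) Hh) as Hsol. fold W Q1 in Hflux, Hsol.
  assert (Hkey : sqrt (- mu) * W * c 1 <= 2 * Q1).
  { assert (- mu * W * h * (c 1 - h * Q1 / W) <= - mu * W * c (1 - h) * h).
    { replace (- mu * W * c (1 - h) * h) with (- mu * W * h * c (1 - h)) by ring.
      apply Rmult_le_compat_l; [repeat apply Rmult_le_pos; lra|lra]. }
    replace (- mu * W * h * (c 1 - h * Q1 / W)) with (sqrt (- mu) * W * c 1 - (- mu * h * h) * Q1)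
      in H0 by (rewrite <- Hmuh; field; lra).
    replace (- mu * h * h) with 1 in H0 by (rewrite Hmuh; unfold h; field; lra). lra. }
  pose proof (weight_pos 1 ltac:(lra)). pose proof (weight_le_pow 1 ltac:(lra)).
  assert (H2m : 0 < 2 ^ m) by (apply pow_lt; lra).
  pose proof (Hc 1 ltac:(lra)).
  assert (sqrt (- mu) * weight (1 / 2) * c 1 <= 2 * Q1).
  { apply (Rle_trans _ (sqrt (- mu) * W * c 1)); auto.
    apply Rmult_le_compat_r; [lra|]. apply Rmult_le_compat_l; lra. }
  assert (HQ1 : 0 <= Q1) by (apply (flux_nonneg_neg_mu mu c c1 c2); auto; lra).
  replace (c1 1) with (Q1 / weight 1) by (unfold Q1, flux; field; lra).
  apply (Rle_trans _ (Q1 / 2 ^ m)).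
  - apply (Rmult_le_reg_r (2 * 2 ^ m)); [lra|].
    replace (sqrt (- mu) * weight (1 / 2) * c 1 / (2 * 2 ^ m) * (2 * 2 ^ m))
      with (sqrt (- mu) * weight (1 / 2) * c 1) by (field; lra).
    replace (Q1 / 2 ^ m * (2 * 2 ^ m)) with (2 * Q1) by (field; lra). lra.
  - unfold Rdiv. apply Rmult_le_compat_l; auto. apply Rinv_le_contravar; lra.
Qed.

(* For 0 < mu < lambda_1 and phi_1 <= B, the combination
   G = w c' + kappa W(c, phi_1) with kappa = mu / (B (lambda_1 - mu)) satisfies
   G' = (mu/B) w c (phi_1 - B) <= 0 and vanishes at 0, so G(1) <= 0, which reads
   c'(1) <= - kappa phi_1'(1)^2 when c(1) = -phi_1'(1). *)
Lemma sol_deriv_at_1_upper lam phi phi1 phi2 mu c c1 c2 B :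
  dir_eigfun n k lam phi phi1 phi2 -> radial_sol mu c c1 c2 ->
  (forall r, 0 < r <= 1 -> 0 < c r) -> c 1 = - phi1 1 -> 0 < mu < lam -> 0 < B ->
  (forall r, 0 < r <= 1 -> phi r <= B) ->
  c1 1 <= - (mu / (B * (lam - mu))) * phi1 1 ^ 2.
Proof.
  intros Hd Hs Hc Hc1 Hmu HB HphiB.
  pose proof (radial_sol_of_eigfun _ _ _ _ Hd) as Hps.
  assert (Hphi1 : phi 1 = 0) by (destruct Hd as [_ [_ [_ [_ [_ H]]]]]; exact H).
  set (ka := mu / (B * (lam - mu))).
  assert (Hka : 0 < ka) by (apply Rdiv_lt_0_compat; [lra|apply Rmult_lt_0_compat; lra]).
  set (G := fun x => flux c1 x + ka * wronskian c c1 phi phi1 x).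
  set (dG := fun x => dflux c1 c2 x + ka * dwronskian c c1 c2 phi phi1 phi2 x).
  assert (HG1 : G 1 <= 0).
  { apply (vanishes_deriv_nonpos G dG); [|lra| |].
    - apply vanishes_lin; [apply (flux_vanishes mu c c1 c2 Hs)|].
      apply (wronskian_vanishes mu lam c c1 c2 phi phi1 phi2); auto.
    - intros x Hx. apply dpl_plus; [apply (flux_deriv mu c); auto|].
      apply derivable_pt_lim_scal. apply (wronskian_deriv mu lam); auto.
    - intros x Hx. unfold dG.
      rewrite (dflux_eq mu c), (dwronskian_eq mu lam c c1 c2 phi phi1 phi2) by auto.
      pose proof (weight_pos x ltac:(lra)). pose proof (Hc x ltac:(lra)).
      pose proof (HphiB x ltac:(lra)).
      replace (- mu * weight x * c x + ka * ((lam - mu) * weight x * c x * phi x))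
        with (mu / B * (weight x * c x) * (phi x - B)) by (unfold ka; field; lra).
      assert (0 < mu / B * (weight x * c x))
        by (apply Rmult_lt_0_compat; [apply Rdiv_lt_0_compat|apply Rmult_lt_0_compat]; lra).
      nra. }
  unfold G, flux, wronskian in HG1. rewrite Hphi1, Hc1 in HG1.
  pose proof (weight_pos 1 ltac:(lra)).
  assert (weight 1 * (c1 1 + ka * phi1 1 ^ 2) <= 0) by (simpl in *; nra).
  assert (c1 1 + ka * phi1 1 ^ 2 <= 0); [|lra].
  destruct (Rle_or_lt (c1 1 + ka * phi1 1 ^ 2) 0) as [|Hlt]; auto. nra.
Qed.
End Radial.

Lemma sum_term_le (f : nat -> R) (J i : nat) : (forall j, 0 <= f j) -> (i <= J)%nat ->
  f i <= sum_f_R0 f J.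
Proof.
  intros Hf. induction J as [|J IH]; intros Hi.
  - replace i with 0%nat by lia. simpl. lra.
  - simpl. destruct (Nat.eq_dec i (S J)) as [->|Hne].
    + pose proof (cond_pos_sum f J Hf). lra.
    + pose proof (Hf (S J)). specialize (IH ltac:(lia)). lra.
Qed.

(* Coefficients of the regular solution u = sum_j a_j Y^j, Y = Y_k(r):
   in the variable Y the equation becomes
   Y (2 - k Y) u_YY + n (1 - k Y) u_Y + mu u = 0, whence the recursion
   a_(i+1) = (k i (i + n - 1) - mu) / ((i + 1) (2 i + n)) a_i, a_0 = 1. *)
Fixpoint series_coef (n : nat) (k : Z) (mu : R) (j : nat) : R :=
  match j with
  | O => 1
  | S i => (IZR k * INR i * (INR i + INR n - 1) - mu) / ((INR i + 1) * (2 * INR i + INR n))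
           * series_coef n k mu i
  end.

Section RegularSolution.
Variables (n : nat) (k : Z) (mu : R).
Hypothesis Hk : k = 1%Z \/ k = (-1)%Z.
Hypothesis Hn : (2 <= n)%nat.

Let a := series_coef n k mu.

Lemma INR_n_ge_2 : 2 <= INR n.
Proof. apply (le_INR 2) in Hn. simpl in Hn. lra. Qed.

Lemma coef_ratio_bound (j : nat) : INR n + 1 + 3 * Rabs mu <= INR j ->
  Rabs ((IZR k * INR j * (INR j + INR n - 1) - mu) / ((INR j + 1) * (2 * INR j + INR n)))
  <= 2 / 3.
Proof.
  intros Hj. pose proof INR_n_ge_2. pose proof (pos_INR j). pose proof (Rabs_pos mu).
  assert (Hd : 0 < (INR j + 1) * (2 * INR j + INR n)) by nra.
  assert (Hk1 : Rabs (IZR k) = 1)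
    by (destruct Hk as [-> | ->]; unfold Rabs; destruct Rcase_abs; simpl in *; lra).
  unfold Rdiv. rewrite Rabs_mult, Rabs_inv, (Rabs_right (_ * _)) by lra.
  assert (Hnum : Rabs (IZR k * INR j * (INR j + INR n - 1) - mu)
                 <= INR j * (INR j + INR n - 1) + Rabs mu).
  { apply (Rle_trans _ _ _ (Rabs_triang _ _)). rewrite Rabs_Ropp, !Rabs_mult, Hk1.
    rewrite (Rabs_right (INR j)), (Rabs_right (INR j + INR n - 1)) by lra. lra. }
  apply (Rmult_le_reg_r ((INR j + 1) * (2 * INR j + INR n))); auto.
  rewrite Rmult_assoc, Rinv_l, Rmult_1_r by lra. nra.
Qed.

Lemma series_coef_geometric : exists M, forall j, Rabs (a j) <= M * (2 / 3) ^ j.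
Proof.
  destruct (INR_unbounded (INR n + 1 + 3 * Rabs mu)) as [J HJ].
  set (f := fun i => Rabs (a i) * (3 / 2) ^ i).
  assert (Hf : forall i, 0 <= f i)
    by (intros i; unfold f; apply Rmult_le_pos; [apply Rabs_pos|apply pow_le; lra]).
  exists (sum_f_R0 f J).
  assert (Hb : forall j, f j <= sum_f_R0 f J).
  { induction j as [|j IH]; [apply sum_term_le; auto; lia|].
    destruct (le_lt_dec (S j) J) as [Hle|Hlt]; [apply sum_term_le; auto|].
    apply (Rle_trans _ (f j)); auto. unfold f, a. simpl series_coef.
    assert (INR J <= INR j) by (apply le_INR; lia).
    pose proof (coef_ratio_bound j ltac:(lra)) as Hq.
    rewrite Rabs_mult. simpl pow. fold a.
    pose proof (Rabs_pos (a j)). assert (0 < (3 / 2) ^ j) by (apply pow_lt; lra).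
    set (q := Rabs _) in Hq |- *.
    assert (q * Rabs (a j) <= 2 / 3 * Rabs (a j)) by (apply Rmult_le_compat_r; lra).
    nra. }
  intros j. specialize (Hb j). unfold f in Hb.
  assert (E : (2 / 3) ^ j * (3 / 2) ^ j = 1)
    by (rewrite <- Rpow_mult_distr; replace (2 / 3 * (3 / 2)) with 1 by field; apply pow1).
  assert (0 < (2 / 3) ^ j) by (apply pow_lt; lra).
  apply (Rmult_le_compat_r ((2 / 3) ^ j)) in Hb; [|lra].
  rewrite Rmult_assoc, (Rmult_comm ((3 / 2) ^ j)), E, Rmult_1_r in Hb. exact Hb.
Qed.

Lemma series_coef_radius y : Rabs y <= 1 -> Rbar_lt (Rabs y) (CV_radius a).
Proof.
  intros Hy. apply (Rbar_lt_le_trans _ (5 / 4)); [simpl; lra|].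
  destruct series_coef_geometric as [M HM].
  apply (proj1 (Lub_Rbar_correct (CV_disk a))). unfold CV_disk.
  apply (@ex_series_le R_AbsRing R_CompleteNormedModule _ (fun j => M * (5 / 6) ^ j)).
  - intros j. change (norm (Rabs (a j * (5 / 4) ^ j))) with (Rabs (Rabs (a j * (5 / 4) ^ j))).
    rewrite Rabs_Rabsolu, Rabs_mult, (Rabs_right ((5 / 4) ^ j)) by (apply Rle_ge, pow_le; lra).
    specialize (HM j). assert (0 < (5 / 4) ^ j) by (apply pow_lt; lra).
    apply (Rle_trans _ (M * (2 / 3) ^ j * (5 / 4) ^ j)); [apply Rmult_le_compat_r; lra|].
    rewrite Rmult_assoc, <- Rpow_mult_distr. replace (2 / 3 * (5 / 4)) with (5 / 6) by field. lra.
  - apply (@ex_series_scal R_AbsRing R_CompleteNormedModule M (fun j => (5 / 6) ^ j)).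
    apply ex_series_geom. rewrite Rabs_right; lra.
Qed.

(* The recursion, read on the coefficients of the equation in the variable Y. *)
Lemma series_coef_eq j :
  2 * PS_incr_1 (PS_derive (PS_derive a)) j
  - IZR k * PS_incr_1 (PS_incr_1 (PS_derive (PS_derive a))) j
  + INR n * PS_derive a j
  - INR n * IZR k * PS_incr_1 (PS_derive a) j
  + mu * a j = 0.
Proof.
  assert (Hrec : forall i, a (S i) =
    (IZR k * INR i * (INR i + INR n - 1) - mu) / ((INR i + 1) * (2 * INR i + INR n)) * a i)
    by reflexivity.
  pose proof INR_n_ge_2.
  destruct j as [|[|i]]; unfold PS_incr_1, PS_derive;
    repeat match goal with |- context [@zero ?G] => change (@zero G) with 0 end;
    rewrite ?Hrec, ?Hrec, ?Hrec, ?S_INR, ?S_INR, ?S_INR.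
  - simpl INR. replace (a 0%nat) with 1 by reflexivity. field. lra.
  - simpl INR. replace (a 0%nat) with 1 by reflexivity. field. lra.
  - pose proof (pos_INR i). field. lra.
Qed.

Lemma series_ode y : Rabs y <= 1 ->
  y * (2 - IZR k * y) * PSeries (PS_derive (PS_derive a)) y
  + INR n * (1 - IZR k * y) * PSeries (PS_derive a) y
  + mu * PSeries a y = 0.
Proof.
  intros Hy.
  set (a1 := PS_derive a). set (a2 := PS_derive a1).
  assert (Hr : Rbar_lt (Rabs y) (CV_radius a)) by (apply series_coef_radius; auto).
  assert (Hr1 : Rbar_lt (Rabs y) (CV_radius a1)) by (unfold a1; rewrite CV_radius_derive; auto).
  assert (Hr2 : Rbar_lt (Rabs y) (CV_radius a2)) by (unfold a2; rewrite CV_radius_derive; auto).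
  pose proof (PSeries_correct a y (CV_radius_inside a y Hr)) as H0.
  pose proof (PSeries_correct a1 y (CV_radius_inside a1 y Hr1)) as H1.
  pose proof (PSeries_correct a2 y (CV_radius_inside a2 y Hr2)) as H2.
  assert (Hc : forall c : R, mult y c = mult c y) by (intros c; apply Rmult_comm).
  pose proof (is_pseries_scal 2 _ _ _ (Hc 2) (is_pseries_incr_1 _ _ _ H2)) as T1.
  pose proof (is_pseries_scal (- IZR k) _ _ _ (Hc _)
    (is_pseries_incr_1 _ _ _ (is_pseries_incr_1 _ _ _ H2))) as T2.
  pose proof (is_pseries_scal (INR n) _ _ _ (Hc _) H1) as T3.
  pose proof (is_pseries_scal (- (INR n * IZR k)) _ _ _ (Hc _) (is_pseries_incr_1 _ _ _ H1)) as T4.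
  pose proof (is_pseries_scal mu _ _ _ (Hc _) H0) as T5.
  pose proof (is_pseries_plus _ _ _ _ _ (is_pseries_plus _ _ _ _ _
    (is_pseries_plus _ _ _ _ _ (is_pseries_plus _ _ _ _ _ T1 T2) T3) T4) T5) as T.
  apply (is_pseries_ext _ (fun _ => 0)) in T.
  2:{ intros j. unfold PS_plus, PS_scal. change plus with Rplus. change scal with Rmult.
      pose proof (series_coef_eq j) as E. fold a1 a2 in E. simpl. lra. }
  apply is_pseries_unique in T. rewrite PSeries_const_0 in T.
  change plus with Rplus in T. change scal with Rmult in T. simpl in T. lra.
Qed.

Definition reg_sol r := PSeries a (Yk k r).
Definition reg_sol1 r := PSeries (PS_derive a) (Yk k r) * Sk k r.
Definition reg_sol2 r :=
  PSeries (PS_derive (PS_derive a)) (Yk k r) * Sk k r ^ 2 + PSeries (PS_derive a) (Yk k r) * Ck k r.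

Lemma reg_sol_radial : radial_sol n k mu reg_sol reg_sol1 reg_sol2.
Proof.
  assert (HD : forall y (b : nat -> R), Rbar_lt (Rabs y) (CV_radius b) ->
                 derivable_pt_lim (PSeries b) y (PSeries (PS_derive b) y))
    by (intros y b Hy; apply is_derive_Reals, is_derive_PSeries; auto).
  assert (Hin : forall r, 0 <= r <= 1 ->
                  forall j : nat, Rbar_lt (Rabs (Yk k r)) (CV_radius (Nat.iter j PS_derive a))).
  { intros r Hr j. induction j as [|j IH].
    - apply series_coef_radius, Yk_bound; auto.
    - simpl. rewrite CV_radius_derive. auto. }
  split; [|split].
  - intros r Hr. assert (Hr' : 0 <= r <= 1) by lra. split.
    + unfold reg_sol, reg_sol1. apply (dpl_comp (Yk k) (PSeries a)); [apply Yk_deriv; auto|].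
      apply HD, (Hin r Hr' 0%nat).
    + unfold reg_sol1, reg_sol2.
      apply (dpl_to _ _ ((PSeries (PS_derive (PS_derive a)) (Yk k r) * Sk k r) * Sk k r
                         + PSeries (PS_derive a) (Yk k r) * Ck k r)); [|ring].
      apply (dpl_mult (fun x => PSeries (PS_derive a) (Yk k x)) (Sk k)); [|apply Sk_deriv; auto].
      apply (dpl_comp (Yk k) (PSeries (PS_derive a))); [apply Yk_deriv; auto|].
      apply HD, (Hin r Hr' 1%nat).
  - intros r Hr. unfold radial_ode, reg_sol, reg_sol1, reg_sol2.
    assert (HS : 0 < Sk k r) by (apply Sk_pos; auto; lra).
    pose proof (series_ode (Yk k r) (Yk_bound k Hk r ltac:(lra))) as E.
    rewrite <- (Sk_sq k Hk r), <- (Ck_Yk k Hk r) in E.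
    replace (PSeries (PS_derive (PS_derive a)) (Yk k r) * Sk k r ^ 2
             + PSeries (PS_derive a) (Yk k r) * Ck k r
             + (INR n - 1) * (Ck k r / Sk k r) * (PSeries (PS_derive a) (Yk k r) * Sk k r)
             + mu * PSeries a (Yk k r))
      with (Sk k r ^ 2 * PSeries (PS_derive (PS_derive a)) (Yk k r)
            + INR n * Ck k r * PSeries (PS_derive a) (Yk k r) + mu * PSeries a (Yk k r))
      by (field; lra).
    lra.
  - apply right_cont_of_cont. unfold reg_sol.
    apply (continuity_pt_comp (Yk k) (PSeries a)).
    + apply derivable_continuous_pt. exists (Sk k 0). apply Yk_deriv; auto.
    + apply PSeries_continuity, (Hin 0 ltac:(lra) 0%nat).
Qed.

Lemma reg_sol_0 : reg_sol 0 = 1.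
Proof. unfold reg_sol. rewrite Yk_0 by auto. apply PSeries_0. Qed.
End RegularSolution.

Lemma freq_large X : exists d, 0 < d /\ forall T, 0 < T < d -> X < (2 * PI / T) ^ 2.
Proof.
  pose proof PI_RGT_0. set (s := sqrt (Rmax X 0 + 1)).
  assert (Hs : 0 < s) by (apply sqrt_lt_R0; pose proof (Rmax_r X 0); lra).
  assert (Hss : s * s = Rmax X 0 + 1) by (apply sqrt_sqrt; pose proof (Rmax_r X 0); lra).
  exists (2 * PI / s). split; [apply Rdiv_lt_0_compat; lra|]. intros T [HT0 HT].
  assert (Hlt : s < 2 * PI / T).
  { apply (Rmult_lt_reg_r T); [lra|]. unfold Rdiv. rewrite Rmult_assoc, Rinv_l, Rmult_1_r by lra.
    apply (Rmult_lt_compat_l s) in HT; auto.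
    replace (s * (2 * PI / s)) with (2 * PI) in HT by (field; lra). lra. }
  pose proof (Rmax_l X 0). simpl. rewrite Rmult_1_r. nra.
Qed.

Lemma freq_small e : 0 < e -> exists N, forall T, N < T -> 0 < T /\ 0 < (2 * PI / T) ^ 2 < e.
Proof.
  intros He. pose proof PI_RGT_0. set (s := sqrt e).
  assert (Hs : 0 < s) by (apply sqrt_lt_R0; lra).
  assert (Hss : s * s = e) by (apply sqrt_sqrt; lra).
  exists (2 * PI / s). intros T HT.
  assert (HT0 : 0 < T) by (pose proof (Rdiv_lt_0_compat (2 * PI) s ltac:(lra) Hs); lra).
  assert (Hf : 0 < 2 * PI / T) by (apply Rdiv_lt_0_compat; lra).
  assert (Hlt : 2 * PI / T < s).
  { apply (Rmult_lt_reg_r T); [lra|]. unfold Rdiv. rewrite Rmult_assoc, Rinv_l, Rmult_1_r by lra.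
    apply (Rmult_lt_compat_l s) in HT; auto.
    replace (s * (2 * PI / s)) with (2 * PI) in HT by (field; lra). lra. }
  simpl. rewrite Rmult_1_r. split; [lra|split; nra].
Qed.

Section Sigma.
Variables (n : nat) (k : Z) (lam : R) (phi phi1 phi2 : R -> R).
Hypothesis Hn : (2 <= n)%nat.
Hypothesis Hk : k = 1%Z \/ k = (-1)%Z.
Hypothesis Hlam : 0 < lam.
Hypothesis Hphi : dir_eigfun n k lam phi phi1 phi2.

Let m := pred n.

Lemma m_ge_1 : (1 <= m)%nat.
Proof. unfold m. lia. Qed.

Lemma INR_n_pred : INR n - 1 = INR m.
Proof. unfold m. destruct n as [|p]; [lia|]. rewrite S_INR. simpl pred. ring. Qed.

Lemma phi1_at_1_neg : phi1 1 < 0.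
Proof. exact (eigfun_deriv_neg_at_1 n k m Hk m_ge_1 INR_n_pred lam phi phi1 phi2 Hlam Hphi). Qed.

(* For T > 0, c_T exists, and every c_T is a positive solution with
   parameter mu_T = lambda_1 - (2 pi/T)^2 and c_T(1) = -phi_1'(1):
   it is the multiple -phi_1'(1) / u(1) of the regular solution u. *)
Lemma c_sol_positive T : 0 < T ->
  (exists c c1 c2, c_sol n k lam phi1 T c c1 c2) /\
  (forall c c1 c2, c_sol n k lam phi1 T c c1 c2 ->
     radial_sol n k (lam - (2 * PI / T) ^ 2) c c1 c2 /\ c 1 = - phi1 1 /\
     forall r, 0 < r <= 1 -> 0 < c r).
Proof.
  intros HT. set (mu := lam - (2 * PI / T) ^ 2).
  assert (Hmu : mu < lam)
    by (unfold mu; pose proof PI_RGT_0; pose proof (pow_lt (2 * PI / T) 2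
          ltac:(apply Rdiv_lt_0_compat; lra)); lra).
  pose proof (reg_sol_radial n k mu Hk Hn) as Hu.
  assert (Hupos : forall r, 0 <= r <= 1 -> 0 < reg_sol n k mu r)
    by (apply (radial_sol_pos n k m Hk m_ge_1 INR_n_pred lam phi phi1 phi2 mu _ _ _ Hphi Hu Hmu);
        rewrite reg_sol_0 by auto; lra).
  pose proof (Hupos 1 ltac:(lra)). pose proof phi1_at_1_neg.
  split.
  - set (al := - phi1 1 / reg_sol n k mu 1).
    destruct (radial_sol_scal n k mu _ _ _ al Hu) as [A1 [A2 A3]].
    exists (fun x => al * reg_sol n k mu x), (fun x => al * reg_sol1 n k mu x),
      (fun x => al * reg_sol2 n k mu x).
    split; [exact A1|split; [exact A2|split; [exact A3|]]].
    cbv beta. unfold al. field. lra.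
  - intros c c1 c2 [A1 [A2 [A3 A4]]].
    assert (Hs : radial_sol n k mu c c1 c2) by (split; [exact A1|split; [exact A2|exact A3]]).
    split; [exact Hs|split; [exact A4|]]. intros r Hr.
    rewrite (radial_sol_proportional n k m Hk m_ge_1 INR_n_pred mu c c1 c2 _ _ _ Hs Hu)
      by (auto; intros; apply Hupos; lra).
    rewrite A4. apply Rmult_lt_0_compat; [apply Rdiv_lt_0_compat|apply Hupos]; lra.
Qed.

(* sigma(T) -> +oo as T -> 0+: by sol_deriv_at_1_lower,
   sigma(T) >= sqrt((2 pi/T)^2 - lambda_1) w(1/2) |phi_1'(1)| / 2^(m+1) + phi_1''(1). *)
Lemma sigma_to_plus_infty M : exists d, 0 < d /\ forall T, 0 < T < d ->
  (exists c c1 c2, c_sol n k lam phi1 T c c1 c2) /\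
  (forall c c1 c2, c_sol n k lam phi1 T c c1 c2 -> c1 1 + phi2 1 > M).
Proof.
  pose proof phi1_at_1_neg.
  set (Mt := Rabs M + Rabs (phi2 1) + 1).
  assert (HMt : 0 < Mt) by (unfold Mt; pose proof (Rabs_pos M); pose proof (Rabs_pos (phi2 1)); lra).
  set (Kc := weight k m (1 / 2) * - phi1 1 / (2 * 2 ^ m)).
  assert (HKc : 0 < Kc).
  { pose proof (weight_pos k m Hk (1 / 2) ltac:(lra)). pose proof (pow_lt 2 m ltac:(lra)).
    unfold Kc. apply Rdiv_lt_0_compat; [apply Rmult_lt_0_compat|]; lra. }
  destruct (freq_large (lam + 4 + (Mt / Kc) ^ 2)) as [d [Hd Hfreq]].
  exists d. split; auto. intros T HT.
  destruct (c_sol_positive T ltac:(lra)) as [Hex Hall]. split; auto.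
  intros c c1 c2 Hc. destruct (Hall c c1 c2 Hc) as [Hs [Hc1 Hpos]].
  specialize (Hfreq T HT). pose proof (pow2_ge_0 (Mt / Kc)).
  pose proof (sol_deriv_at_1_lower n k m Hk m_ge_1 INR_n_pred _ c c1 c2 Hs Hpos ltac:(lra)) as Hlow.
  rewrite Hc1 in Hlow. replace (- (lam - (2 * PI / T) ^ 2)) with ((2 * PI / T) ^ 2 - lam) in Hlow by ring.
  replace (sqrt ((2 * PI / T) ^ 2 - lam) * weight k m (1 / 2) * - phi1 1 / (2 * 2 ^ m))
    with (sqrt ((2 * PI / T) ^ 2 - lam) * Kc) in Hlow by (unfold Kc; field; pose proof (pow_lt 2 m); lra).
  assert (Hroot : Mt / Kc <= sqrt ((2 * PI / T) ^ 2 - lam)).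
  { rewrite <- (sqrt_pow2 (Mt / Kc)) by (left; apply Rdiv_lt_0_compat; lra).
    apply sqrt_le_1_alt. lra. }
  assert (Mt <= sqrt ((2 * PI / T) ^ 2 - lam) * Kc).
  { apply (Rmult_le_compat_r Kc) in Hroot; [|lra].
    replace (Mt / Kc * Kc) with Mt in Hroot by (field; lra). lra. }
  unfold Mt in *. pose proof (Rle_abs M). pose proof (Rle_abs (- phi2 1)). rewrite Rabs_Ropp in *. lra.
Qed.

(* sigma(T) -> -oo as T -> +oo: with eps = (2 pi/T)^2 = lambda_1 - mu_T -> 0,
   sol_deriv_at_1_upper gives sigma(T) <= - mu_T phi_1'(1)^2 / (B eps) + phi_1''(1). *)
Lemma sigma_to_minus_infty M : exists N, forall T, N < T ->
  (exists c c1 c2, c_sol n k lam phi1 T c c1 c2) /\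
  (forall c c1 c2, c_sol n k lam phi1 T c c1 c2 -> c1 1 + phi2 1 < M).
Proof.
  pose proof phi1_at_1_neg.
  set (Mt := Rabs M + Rabs (phi2 1) + 1).
  assert (HMt : 0 < Mt) by (unfold Mt; pose proof (Rabs_pos M); pose proof (Rabs_pos (phi2 1)); lra).
  destruct Hphi as [_ [_ [_ [[B0 HB0] _]]]].
  set (B := Rmax B0 1).
  assert (HB : 0 < B) by (unfold B; pose proof (Rmax_r B0 1); lra).
  assert (HphiB : forall r, 0 < r <= 1 -> phi r <= B).
  { intros r Hr. pose proof (HB0 r Hr). pose proof (Rle_abs (phi r)). pose proof (Rmax_l B0 1).
    unfold B. lra. }
  set (g2 := phi1 1 ^ 2). assert (Hg2 : 0 < g2) by (unfold g2; simpl; nra).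
  set (e0 := Rmin (lam / 2) (lam * g2 / (2 * B * Mt))).
  assert (He0 : 0 < e0)
    by (unfold e0; apply Rmin_pos; [lra|]; apply Rdiv_lt_0_compat;
        [apply Rmult_lt_0_compat; assumption|apply Rmult_lt_0_compat; [apply Rmult_lt_0_compat|]; lra]).
  destruct (freq_small e0 He0) as [N HN]. exists N. intros T HT.
  destruct (HN T HT) as [HT0 [Hep0 Hep]]. set (ep := (2 * PI / T) ^ 2) in *.
  destruct (c_sol_positive T HT0) as [Hex Hall]. split; auto.
  intros c c1 c2 Hc. destruct (Hall c c1 c2 Hc) as [Hs [Hc1 Hpos]].
  unfold e0 in Hep. pose proof (Rmin_l (lam / 2) (lam * g2 / (2 * B * Mt))).
  pose proof (Rmin_r (lam / 2) (lam * g2 / (2 * B * Mt))).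
  pose proof (sol_deriv_at_1_upper n k m Hk m_ge_1 INR_n_pred lam phi phi1 phi2 (lam - ep)
    c c1 c2 B Hphi Hs Hpos Hc1 ltac:(lra) HB HphiB) as Hup.
  replace (lam - (lam - ep)) with ep in Hup by ring. fold g2 in Hup.
  assert (Hbig : Mt < lam * g2 / (2 * B * ep)).
  { apply (Rmult_lt_reg_r ep); auto.
    replace (lam * g2 / (2 * B * ep) * ep) with (lam * g2 / (2 * B)) by (field; lra).
    assert (Hlt : ep < lam * g2 / (2 * B * Mt)) by lra.
    apply (Rmult_lt_compat_l Mt) in Hlt; auto.
    replace (Mt * (lam * g2 / (2 * B * Mt))) with (lam * g2 / (2 * B)) in Hlt by (field; lra).
    lra. }
  assert (lam * g2 / (2 * B * ep) <= (lam - ep) / (B * ep) * g2).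
  { replace (lam * g2 / (2 * B * ep)) with ((lam / 2) / (B * ep) * g2) by (field; lra).
    apply Rmult_le_compat_r; [lra|]. unfold Rdiv. apply Rmult_le_compat_r; [|lra].
    left. apply Rinv_0_lt_compat, Rmult_lt_0_compat; lra. }
  unfold Mt in *. pose proof (Rle_abs (- M)). pose proof (Rle_abs (phi2 1)).
  rewrite Rabs_Ropp in *. lra.
Qed.
End Sigma.

Theorem proposition7p1 (n : nat) (k : Z) (lam : R) (phi phi1 phi2 : R -> R) :
  (2 <= n)%nat ->
  (k = 1%Z \/ k = (-1)%Z) ->
  first_dir_eig n k lam ->
  dir_eigfun n k lam phi phi1 phi2 ->
  L2_normalized n k phi ->
  (forall M, exists d, 0 < d /\ forall T, 0 < T < d ->
     (exists c c1 c2, c_sol n k lam phi1 T c c1 c2) /\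
     (forall c c1 c2, c_sol n k lam phi1 T c c1 c2 -> c1 1 + phi2 1 > M)) /\
  (forall M, exists N, forall T, N < T ->
     (exists c c1 c2, c_sol n k lam phi1 T c c1 c2) /\
     (forall c c1 c2, c_sol n k lam phi1 T c c1 c2 -> c1 1 + phi2 1 < M)).
Proof.
  intros Hn Hk [Hlam _] Hphi _. split.
  - exact (sigma_to_plus_infty n k lam phi phi1 phi2 Hn Hk Hlam Hphi).
  - exact (sigma_to_minus_infty n k lam phi phi1 phi2 Hn Hk Hlam Hphi).
Qed.
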